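(* Let $n\le -1$ be an odd integer with $3\mid n$. Then $$q_n-(1-w)\,q'_n\equiv -w\pmod 3,$$ where $q'_n=dq_n/dw$ and the congruence is coefficientwise in $\mathbb{Z}[w]$.
   Context: Define $q_n\in\mathbb{Z}[w]$ for odd $n\le -1$ by $q_{-1}=w^3-w^2+2w-7$, $q_{-3}=w^5-2w^4-2w^3+5w^2+3w-9$, $q_{-5}=w^7-2w^6-4w^5+8w^4+4w^3-7w^2+2w-7$, and $q_n=(w^2-1)(q_{n+2}-q_{n+4})+q_{n+6}$ for odd $n<-5$. *)

From HB Require Import structures.
From mathcomp Require Import all_boot all_order all_algebra.
Set Implicit Arguments. Unset Strict Implicit. Unset Printing Implicit Defensive.
Import Order.TTheory GRing.Theory Num.Theory.
Local Open Scope ring_scope.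

(* qseq k = q_{-(2k+1)} in the paper's notation. *)
Definition q_m1 : {poly int} := 'X^3 - 'X^2 + 2%:P * 'X - 7%:P.
Definition q_m3 : {poly int} :=
  'X^5 - 2%:P * 'X^4 - 2%:P * 'X^3 + 5%:P * 'X^2 + 3%:P * 'X - 9%:P.
Definition q_m5 : {poly int} :=
  'X^7 - 2%:P * 'X^6 - 4%:P * 'X^5 + 8%:P * 'X^4 + 4%:P * 'X^3
  - 7%:P * 'X^2 + 2%:P * 'X - 7%:P.

Fixpoint qseq (k : nat) : {poly int} :=
  match k with
  | 0%N => q_m1
  | 1%N => q_m3
  | 2%N => q_m5
  | S ((S (S k0 as k1)) as k2) =>
      ('X^2 - 1) * (qseq k2 - qseq k1) + qseq k0
  end.

(* q_n for odd n <= -1 : n = -(2k+1), k = |n| / 2. (Values for other n are junk.) *)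
Definition q (n : int) : {poly int} := qseq (absz n)./2.

From HB Require Import structures.
From mathcomp Require Import all_boot all_order all_algebra.
From mathcomp Require Import ring zify.
Import Order.TTheory GRing.Theory Num.Theory.
Local Open Scope ring_scope.

(* Since ((1 - w) q)' = -q + (1 - w) q', the claim says that
   ((1 - w) q_n)' = w modulo 3 whenever 3 | n.  Write u_k = q_{-(2k+1)}; it
   satisfies u_{k+3} = F (u_{k+2} - u_{k+1}) + u_k with F = w^2 - 1, and 3 | n
   means k = 1 (mod 3).
   - A recurrence of this shape with multiplier c, read along every third
     term, is again of this shape, with multiplier
     cube_mult c = (c-1)^3 - 3(c-1) + 1; in characteristic 3 the derivative
     of cube_mult c vanishes, so derivatives of solutions are solutions.
   - The recurrence is run backwards five steps to a sequence qext with
     qext (k + 5) = u_k; then u_k with k = 1 (mod 3) is qext (3 m).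
   - Reducing mod 3, v_m = ((1 - w) qext (3 m))' solves the every-third
     recurrence, and v_0 = v_1 = v_2 = w by direct computation; a solution
     of a third-order recurrence with three equal initial terms is constant. *)

Section Recurrence.
Context {R : comNzRingType}.

Definition recurrent (c : R) (u : nat -> R) :=
  forall k, u k.+3 = c * (u k.+2 - u k.+1) + u k.

Lemma recurrent_eq {c u v} : recurrent c u -> recurrent c v ->
  u 0 = v 0 -> u 1 = v 1 -> u 2 = v 2 -> forall k, u k = v k.
Proof.
move=> ru rv e0 e1 e2.
suff H k : [/\ u k = v k, u k.+1 = v k.+1 & u k.+2 = v k.+2].
  by move=> k; case: (H k).
elim: k => [|k [ek ek1 ek2]]; first by [].
by split=> //; rewrite ru rv ek ek1 ek2.
Qed.

Lemma recurrent_const c a : recurrent c (fun=> a).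
Proof. by move=> k; rewrite subrr mulr0 add0r. Qed.

Lemma recurrent_shift m {c u} : recurrent c u -> recurrent c (fun k => u (k + m)%N).
Proof. by move=> ru k; rewrite !addSn ru. Qed.

Lemma recurrent_scale a {c u} : recurrent c u -> recurrent c (fun k => a * u k).
Proof. by move=> ru k; rewrite ru; ring. Qed.

(* The characteristic polynomial t^3 - c t^2 + c t - 1 has roots 1, l, 1/l
   with c = l + 1/l + 1; cube_mult c = l^3 + 1/l^3 + 1 is the multiplier of
   the recurrence satisfied by every third term of a solution. *)
Definition cube_mult (c : R) : R := (c - 1) ^+ 3 - 3%:R * (c - 1) + 1.

Lemma recurrent_every_third j {c u} :
  recurrent c u -> recurrent (cube_mult c) (fun k => u (3 * k + j)%N).
Proof.
move=> ru k; set t := (3 * k + j)%N.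
have -> : (3 * k.+3 + j = t.+3.+3.+3)%N by rewrite /t; lia.
have -> : (3 * k.+2 + j = t.+3.+3)%N by rewrite /t; lia.
have -> : (3 * k.+1 + j = t.+3)%N by rewrite /t; lia.
by rewrite !ru /cube_mult; ring.
Qed.

End Recurrence.

Lemma recurrent_map {R S : comNzRingType} (f : {rmorphism R -> S}) {c u} :
  recurrent c u -> recurrent (f c) (fun k => f (u k)).
Proof. by move=> ru k; rewrite ru rmorphD rmorphM rmorphB. Qed.

(* In characteristic 3, cube_mult c = (c-1)^3 + 1 has zero derivative. *)
Lemma cube_mult_deriv (R : comNzRingType) (c : {poly R}) :
  3%:R = 0 :> R -> (cube_mult c)^`() = 0.
Proof.
move=> char3; have char3P : 3%:R = 0 :> {poly R} by rewrite -polyC_natr char3.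
rewrite /cube_mult !derivE.
transitivity (3%:R * (c^`() * ((c - 1) ^+ 2 - 1))); first by ring.
by rewrite char3P mul0r.
Qed.

(* Multiplication by a polynomial with zero derivative commutes with d/dw. *)
Lemma recurrent_deriv (R : comNzRingType) (c : {poly R}) u :
  c^`() = 0 -> recurrent c u -> recurrent c (fun k => (u k)^`()).
Proof.
by move=> dc ru k; rewrite ru derivD derivM derivB dc mul0r add0r.
Qed.

Definition mod3 : {rmorphism {poly int} -> {poly 'F_3}} := map_poly intr.

Lemma mod3_eq0 (p : {poly int}) i : mod3 p = 0 -> (3 %| p`_i)%Z.
Proof.
move=> p0; rewrite (dvdz_pcharf (pchar_Fp (isT : prime 3))).
by rewrite -coef_map -/(mod3 p) p0 coef0.
Qed.

Lemma mod3_3X (h : {poly int}) : mod3 ('X + 3%:P * h) = 'X.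
Proof.
have int3 : 3%:~R = 0 :> 'F_3.
  by apply/eqP; rewrite -(dvdz_pcharf (pchar_Fp (isT : prime 3))).
by rewrite rmorphD rmorphM /= map_polyX map_polyC /= int3 mul0r addr0.
Qed.

Definition F : {poly int} := 'X^2 - 1.

Lemma qseq_recurrent : recurrent F qseq.
Proof. by []. Qed.

(* The sequence (q_{-(2k+1)})_k run backwards five steps, so that
   qext j = q_{9-2j}; its third initial value is q_5. *)
Definition q_5 : {poly int} := 'X^2 + 3%:P * 'X - 9%:P.

Fixpoint qext (k : nat) : {poly int} :=
  match k with
  | 0%N => q_m3
  | 1%N => q_m1
  | 2%N => q_5
  | S ((S (S k0 as k1)) as k2) => F * (qext k2 - qext k1) + qext k0
  end.

Lemma qext_recurrent : recurrent F qext.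
Proof. by []. Qed.

Lemma qseq_qext k : qseq k = qext (k + 5).
Proof.
apply: (recurrent_eq qseq_recurrent (recurrent_shift 5 qext_recurrent));
  rewrite /= /F /q_m1 /q_m3 /q_m5 /q_5; ring.
Qed.

(* The three initial values ((1 - w) qext (3 m))' = w (mod 3), m = 0, 1, 2;
   note qext 6 = qseq 1 = qext 0. *)
Lemma deriv_qext0 : ((1 - 'X) * qext 0)^`() =
  'X + 3%:P * (4%:P + 'X - 7%:P * 'X^2 + 5%:P * 'X^4 - 2%:P * 'X^5).
Proof.
by rewrite /= /q_m3 !(derivD, derivB, derivN, derivM, derivXn, derivX, derivC) /=; ring.
Qed.

Lemma deriv_qext3 : ((1 - 'X) * qext 3)^`() = 'X + 3%:P * (3%:P - 'X - 'X^2).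
Proof.
rewrite /= /F /q_m3 /q_m1 /q_5.
by rewrite !(derivD, derivB, derivN, derivM, derivXn, derivX, derivC) /=; ring.
Qed.

Lemma deriv_qext6 : qext 6 = qext 0.
Proof. by rewrite -[6%N]/(1 + 5)%N -qseq_qext. Qed.

Lemma deriv_qext_mod3 m : (mod3 ((1 - 'X) * qext (3 * m)))^`() = 'X.
Proof.
have rec : recurrent (cube_mult (mod3 F))
    (fun m => (mod3 ((1 - 'X) * qext (3 * m)))^`()).
  apply: recurrent_deriv; first exact/cube_mult_deriv/(pchar_Fp_0 (isT : prime 3)).
  have := recurrent_every_third 0 (recurrent_map mod3 qext_recurrent).
  move/(recurrent_scale (mod3 (1 - 'X))) => r k.
  by have := r k; rewrite /= !addn0 -!rmorphM.
apply: (recurrent_eq rec (recurrent_const _ 'X)); cbv beta; rewrite deriv_map.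
- by rewrite deriv_qext0 mod3_3X.
- by rewrite deriv_qext3 mod3_3X.
- by rewrite deriv_qext6 deriv_qext0 mod3_3X.
Qed.

Lemma half_add5_dvd3 (a : nat) : odd a -> (3 %| a)%N -> (3 %| a./2 + 5)%N.
Proof. by move=> ao a3; have := odd_double_half a; rewrite ao -muln2 => e; lia. Qed.

Theorem lemma5p3 (n : int) :
  n <= -1 -> ~~ (2 %| n)%Z -> (3 %| n)%Z ->
  forall i : nat,
    (3 %| (q n - (1 - 'X) * (q n)^`() + 'X)`_i)%Z.
Proof.
rewrite !dvdzE dvdn2 negbK => _ odd_n dvd3_n i; apply: mod3_eq0.
have /dvdnP[m qn] : (3 %| (absz n)./2 + 5)%N by exact: half_add5_dvd3.
have -> : q n - (1 - 'X) * (q n)^`() + 'X = 'X - ((1 - 'X) * q n)^`().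
  by rewrite derivM derivB -polyC1 derivC derivX; ring.
rewrite /q qseq_qext qn mulnC rmorphB /= map_polyX -deriv_map.
by rewrite deriv_qext_mod3 subrr.
Qed.
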